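(* Let $\Delta$ be a finite set and $P$ a shift-invariant probability measure on $\Delta^{\mathbb Z}$. Fix any version $\omega\mapsto P(X_{\mathbb N}\in\cdot\mid X_{-\mathbb N_0})(\omega)$ of the conditional distribution of the future given the past, and call the elements of its image the causal states. Then the process dimension $\dim(P)$ is at most the number of causal states (allowing the value $\infty$); equivalently, $\log\dim(P)$ is bounded above by the topological statistical complexity, the logarithm of the number of causal states.
   Context: $X_k$ is the $k$-th coordinate projection on $\Delta^{\mathbb Z}$, $X_{\mathbb N}=(X_1,X_2,\dots)$ the future and $X_{-\mathbb N_0}=(\dots,X_{-1},X_0)$ the past. $\sigma$ is the left shift on $\Delta^{\mathbb N}$; for $d_1,\dots,d_n\in\Delta$, $[d_1,\dots,d_n]$ is the cylinder set of sequences starting with $d_1,\dots,d_n$, and for a finite signed measure $\mu$ on $\Delta^{\mathbb N}$, $\tau_{d_1\cdots d_n}(\mu)(B)=\mu([d_1,\dots,d_n]\cap\sigma^{-n}(B))$ (empty word: $\tau(\mu)=\mu$). With $P_{\mathbb N}=P\circ X_{\mathbb N}^{-1}$, the canonical OOM vector space is $V_P=\operatorname{span}\{\tau_w(P_{\mathbb N}): w \text{ finite word over }\Delta\}$ and the process dimension is $\dim(P)=\dim(V_P)$. *)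

From HB Require Import structures.
From mathcomp Require Import all_boot all_order all_algebra.
From mathcomp Require Import all_classical all_reals all_analysis.
From mathcomp Require Import measurable_realfun.
Unset Printing Implicit Defensive.
Import Order.TTheory GRing.Theory Num.Theory.
Local Open Scope classical_set_scope.
Local Open Scope ring_scope.

(* The future space Delta^N is indexed by nat: index 0 corresponds to X_1.
   d0 is an arbitrary point of Delta, used only to equip the sequence
   spaces with the pointedType structure MathComp-Analysis requires of a
   measurable space (it does not enter any definition below). *)
Definition seqZ {Delta : finType} (d0 : Delta) : Type := int -> Delta.
Definition seqN {Delta : finType} (d0 : Delta) : Type := nat -> Delta.
HB.instance Definition _ {Delta : finType} (d0 : Delta) :=
  Choice.on (seqZ d0).
HB.instance Definition _ {Delta : finType} (d0 : Delta) :=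
  isPointed.Build (seqZ d0) (fun=> d0).
HB.instance Definition _ {Delta : finType} (d0 : Delta) :=
  Choice.on (seqN d0).
HB.instance Definition _ {Delta : finType} (d0 : Delta) :=
  isPointed.Build (seqN d0) (fun=> d0).

Definition cylZ {Delta : finType} (d0 : Delta) : set (set (seqZ d0)) :=
  [set A | exists (k : int) (d : Delta), A = [set w | w k = d]].
(* generators of the sigma-algebra of the past X_{-N_0} = (..., X_{-1}, X_0) *)
Definition cylPast {Delta : finType} (d0 : Delta) : set (set (seqZ d0)) :=
  [set A | exists (k : int) (d : Delta), (k <= 0)%R /\ A = [set w | w k = d]].
Definition cylN {Delta : finType} (d0 : Delta) : set (set (seqN d0)) :=
  [set A | exists (k : nat) (d : Delta), A = [set x | x k = d]].

Definition OmegaZ {Delta : finType} (d0 : Delta) := g_sigma_algebraType (cylZ d0).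
Definition FutN {Delta : finType} (d0 : Delta) := g_sigma_algebraType (cylN d0).

Section Process.
Context {R : realType} {Delta : finType} {d0 : Delta}.
Local Notation Omega := (OmegaZ d0).
Local Notation Fut := (FutN d0).

Definition shiftZ (w : Omega) : Omega := fun k => w (k + 1)%R.

Definition shift_invariant (P : probability Omega R) : Prop :=
  forall A : set Omega, measurable A -> P (shiftZ @^-1` A) = P A.

Definition futureX (w : Omega) : Fut := fun n => w (n.+1)%:Z.

Definition pastMeas : set (set Omega) := <<s cylPast d0 >>.

Definition cond_dist_future_given_past (P : probability Omega R)
    (kappa : Omega -> probability Fut R) : Prop :=
  (forall B : set Fut, measurable B ->
     forall Y : set (\bar R), measurable Y ->
       pastMeas ((fun w => kappa w B) @^-1` Y)) /\
  (forall (A : set Omega) (B : set Fut), pastMeas A -> measurable B ->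
     P (A `&` futureX @^-1` B) = (\int[P]_(w in A) kappa w B)%E).

(* The causal states are the elements of the image of kappa (measures on
   Delta^N, i.e. identified when they agree on all measurable sets).
   "There are at most n causal states". *)
Definition causal_states_atmost (kappa : Omega -> probability Fut R) (n : nat)
  : Prop :=
  exists rep : 'I_n -> Omega, forall w : Omega, exists i : 'I_n,
    forall B : set Fut, measurable B -> kappa w B = kappa (rep i) B.

Definition cylinder (s : seq Delta) : set Fut :=
  [set x | forall i, (i < size s)%N -> x i = nth d0 s i].

Definition shiftN_pre (n : nat) (B : set Fut) : set Fut :=
  [set x | B (fun k => x (k + n)%N)].

Definition P_N (P : probability Omega R) (B : set Fut) : R :=
  fine (P (futureX @^-1` B)).

Definition tau (P : probability Omega R) (s : seq Delta) (B : set Fut) : R :=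
  P_N P (cylinder s `&` shiftN_pre (size s) B).

(* Finite signed measures on Delta^N are represented as real functions on
   sets; only their values on measurable sets matter. *)
Definition in_VP (P : probability Omega R) (g : set Fut -> R) : Prop :=
  exists s : seq (R * seq Delta), forall B : set Fut, measurable B ->
    g B = \sum_(p <- s) p.1 * tau P p.2 B.

Definition lin_indep {m : nat} (f : 'I_m -> set Fut -> R) : Prop :=
  forall c : 'I_m -> R,
    (forall B : set Fut, measurable B -> \sum_(i < m) c i * f i B = 0) ->
    forall i, c i = 0.

(* dim(P) = dim(V_P) <= n : every linearly independent family in V_P has
   at most n elements *)
Definition process_dim_atmost (P : probability Omega R) (n : nat) : Prop :=
  forall (m : nat) (f : 'I_m -> set Fut -> R),
    (forall i, in_VP P (f i)) -> lin_indep f -> (m <= n)%N.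

End Process.

Set Warnings "-notation-overridden,-ambiguous-paths,-redundant-canonical-projection".
From HB Require Import structures.
From mathcomp Require Import all_boot all_order all_algebra.
From mathcomp Require Import all_classical all_reals all_analysis.
From mathcomp Require Import measurable_realfun.
Import Order.TTheory GRing.Theory Num.Theory.
Local Open Scope classical_set_scope.
Local Open Scope ring_scope.

(* Let kappa take its values among the n causal states mu_1, ..., mu_n, and let
   C_j be the set of pasts whose causal state is mu_j.  The C_j form a partition
   of the sample space into past-measurable events, so for every
   past-measurable A the defining identity of kappa reads
     P(A /\ {X_N in B}) = sum_j P(A /\ C_j) mu_j(B).
   Let A_s be the event that the last |s| symbols of the past spell the word s.
   By shift invariance tau_s(P_N)(B) = P(A_s /\ {X_N in B}), hence every
   tau_s(P_N), and so all of V_P, lies in the span of mu_1, ..., mu_n. *)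

Lemma lin_indep_in_span_leq (K : fieldType) (T : Type) (M : T -> Prop)
    (n m : nat) (g : 'I_n -> T -> K) (f : 'I_m -> T -> K) :
  (forall k, exists a : 'I_n -> K,
     forall B, M B -> f k B = \sum_(i < n) a i * g i B) ->
  (forall c : 'I_m -> K,
     (forall B, M B -> \sum_(k < m) c k * f k B = 0) -> forall k, c k = 0) ->
  (m <= n)%N.
Proof.
move=> f_span f_indep; have [a ha] := choice f_span.
rewrite leqNgt; apply/negP => ltnm.
set A : 'M[K]_(m, n) := \matrix_(k, i) a k i.
have : kermx A != 0.
  rewrite kermx_eq0; apply/negP => /eqP rkA.
  by move: (rank_leq_col A); rewrite rkA leqNgt ltnm.
case/matrix0Pn => i [k0 ker_nz].
pose c : 'I_m -> K := kermx A i.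
have c_ker l : \sum_(k < m) c k * a k l = 0.
  have := congr1 (fun X : 'M[K]_(m, n) => X i l) (mulmx_ker A).
  rewrite !mxE => ker0; rewrite -[RHS]ker0; apply: eq_bigr => k _.
  by rewrite [A _ _]mxE.
have c_rel B : M B -> \sum_(k < m) c k * f k B = 0.
  move=> MB; under eq_bigr => k _ do rewrite (ha k B MB) big_distrr.
  rewrite exchange_big big1 //= => l _.
  under eq_bigr => k _ do rewrite mulrA.
  by rewrite -big_distrl /= c_ker mul0r.
by move: ker_nz; rewrite -[kermx A i k0]/(c k0) (f_indep _ c_rel k0) eqxx.
Qed.

Lemma separating_sets (d : measure_display) (T : measurableType d) (I : Type)
    (V : Type) (mu : I -> set T -> V) :
  exists S : I -> I -> set T, forall i j, measurable (S i j) /\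
    ((forall B, measurable B -> mu i B = mu j B) \/ mu i (S i j) <> mu j (S i j)).
Proof.
have sep (ij : I * I) : exists B : set T, measurable B /\
    ((forall B, measurable B -> mu ij.1 B = mu ij.2 B) \/ mu ij.1 B <> mu ij.2 B).
  have [[B [mB neqB]]|no_sep] :=
    pselect (exists B, measurable B /\ mu ij.1 B <> mu ij.2 B).
    by exists B; split => //; right.
  exists setT; split => //; left => B mB.
  by apply: contrapT => neqB; apply: no_sep; exists B.
have [S hS] := choice sep.
by exists (fun i j => S (i, j)) => i j; exact: (hS (i, j)).
Qed.

Lemma measurable_preimage (d d' : measure_display) (T : measurableType d)
    (U : measurableType d') (f : T -> U) (B : set U) :
  measurable_fun setT f -> measurable B -> measurable (f @^-1` B).
Proof. by move=> mf mB; rewrite -[_ @^-1` _]setTI; exact: mf. Qed.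

Section ShiftAndPast.
Context {R : realType} {Delta : finType} {d0 : Delta}.
Local Notation Omega := (OmegaZ d0).
Local Notation Fut := (FutN d0).
Local Notation Past := (g_sigma_algebraType (cylPast d0)).

Lemma measurable_futureX : measurable_fun setT (@futureX Delta d0).
Proof.
apply: (@measurability _ _ Omega Fut setT futureX (cylN d0)) => //.
move=> _ [_ [k [d ->]] <-]; apply: sub_sigma_algebra.
by exists k.+1%:Z, d; rewrite setTI.
Qed.

Lemma measurable_shiftZ : measurable_fun setT (@shiftZ Delta d0).
Proof.
apply: (@measurability _ _ Omega Omega setT shiftZ (cylZ d0)) => //.
move=> _ [_ [k [d ->]] <-]; apply: sub_sigma_algebra.
by exists (k + 1), d; rewrite setTI.
Qed.

Lemma past_measurable {A : set Omega} : pastMeas A -> measurable A.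
Proof. by apply: sub_sigma_algebra2 => _ [k [d [_ ->]]]; exists k, d. Qed.

Lemma iter_shiftZ k (w : Omega) :
  iter k shiftZ w = (fun j => w (j + k%:Z)) :> (int -> Delta).
Proof.
elim: k => [|k IH] /=; first by apply: funext => j; rewrite addr0.
rewrite IH /shiftZ; apply: funext => j /=.
by rewrite -addrA -addn1 PoszD (addrC 1).
Qed.

Lemma shift_invariant_iter (P : probability Omega R) k (E : set Omega) :
  shift_invariant P -> measurable E -> P (iter k shiftZ @^-1` E) = P E.
Proof.
move=> Pinv; elim: k E => [//|k IH] E mE /=.
rewrite -[_ @^-1` E]/(iter k shiftZ @^-1` (shiftZ @^-1` E)) IH ?Pinv //.
exact: measurable_preimage measurable_shiftZ mE.
Qed.

Definition past_word (s : seq Delta) : set Omega :=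
  [set w | forall i, (i < size s)%N -> w (i.+1%:Z - (size s)%:Z) = nth d0 s i].

Lemma past_word_past s : pastMeas (past_word s).
Proof.
have -> : past_word s = \bigcap_(i in [set: 'I_(size s)])
    [set w : Omega | w (i.+1%:Z - (size s)%:Z) = nth d0 s i].
  apply/seteqP; split => w /= ws i; first by move=> _; exact: ws.
  by move=> lti; exact: (ws (Ordinal lti)).
apply: (@fin_bigcap_measurable _ Past) => [|i _]; first exact: finite_finset.
apply: sub_sigma_algebra; exists (i.+1%:Z - (size s)%:Z), (nth d0 s i).
by rewrite subr_le0 lez_nat.
Qed.

Lemma futureX_preimage_tau s (B : set Fut) :
  futureX @^-1` (cylinder s `&` shiftN_pre (size s) B) =
  iter (size s) shiftZ @^-1` (past_word s `&` futureX @^-1` B).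
Proof.
have shiftE (w : Omega) : (fun k => w (k + size s).+1%:Z) =
    (fun j => w (j.+1%:Z + (size s)%:Z)).
  by apply: funext => k; rewrite -PoszD addSn.
apply/seteqP; split => w; rewrite /preimage /= iter_shiftZ.
- move=> [ws wB]; split.
    by move=> i lti; rewrite subrK; exact: ws.
  by move: wB; rewrite /shiftN_pre /futureX /= shiftE.
- move=> [ws wB]; split; last by rewrite /shiftN_pre /futureX /= shiftE.
  by move=> i /ws; rewrite subrK.
Qed.

End ShiftAndPast.

Section CausalStates.
Context {R : realType} {Delta : finType} {d0 : Delta}.
Local Notation Omega := (OmegaZ d0).
Local Notation Fut := (FutN d0).
Local Notation Past := (g_sigma_algebraType (cylPast d0)).

Variables (P : probability Omega R) (kappa : Omega -> probability Fut R).
Hypothesis kappa_cond : cond_dist_future_given_past P kappa.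
Variables (n : nat) (state : 'I_n -> Omega).
Hypothesis kappa_state : forall w : Omega, exists i : 'I_n,
  forall B : set Fut, measurable B -> kappa w B = kappa (state i) B.

Definition same_state (i j : 'I_n) := forall B : set Fut, measurable B ->
  kappa (state i) B = kappa (state j) B.

Variable sep : 'I_n -> 'I_n -> set Fut.
Hypothesis sepP : forall i j, measurable (sep i j) /\
  (same_state i j \/ kappa (state i) (sep i j) <> kappa (state j) (sep i j)).

(* Since there are only finitely many causal states, agreement with the
   state j on the finitely many separating sets sep i j already forces
   kappa w to be the state j; this is what makes the event past-measurable. *)
Definition in_state (j : 'I_n) : set Omega :=
  \bigcap_(i in [set: 'I_n])
    [set w | kappa w (sep i j) = kappa (state j) (sep i j)].

Lemma in_stateP j w :
  in_state j w <-> forall B, measurable B -> kappa w B = kappa (state j) B.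
Proof.
split => [w_j|wj i _]; last by apply: wj; case: (sepP i j).
have [i wi] := kappa_state w.
case: (sepP i j) => msep [ij|]; first by move=> B mB; rewrite wi // ij.
by rewrite -wi // w_j.
Qed.

Lemma in_state_past j : pastMeas (in_state j).
Proof.
apply: (@fin_bigcap_measurable _ Past) => [|i _]; first exact: finite_finset.
exact: kappa_cond.1 _ (sepP i j).1 _ (emeasurable_set1 _).
Qed.

Definition first_state (j : 'I_n) : set Omega :=
  in_state j `&` \bigcap_(i in [set i : 'I_n | (i < j)%N]) ~` in_state i.

Lemma first_state_past j : pastMeas (first_state j).
Proof.
apply: (@measurableI _ Past); first exact: in_state_past.
apply: (@fin_bigcap_measurable _ Past) => [|i _]; first exact: finite_finset.
exact: (@measurableC _ Past) (in_state_past i).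
Qed.

Lemma first_state_measurable j : measurable (first_state j).
Proof. exact: past_measurable (first_state_past j). Qed.

Lemma first_state_exists w : exists j, first_state j w.
Proof.
have [t wt] := kappa_state w.
suff min_state : forall k (i : 'I_n), (i < k)%N -> in_state i w ->
    exists j, first_state j w.
  by apply: (min_state t.+1 t) => //; apply/in_stateP.
elim=> [//|k IH] i ltik wi.
have [[i' [lti'i wi']]|none] :=
  pselect (exists i' : 'I_n, (i' < i)%N /\ in_state i' w).
  by apply: (IH i') => //; exact: leq_trans lti'i ltik.
by exists i; split => // i' lti'i wi'; apply: none; exists i'.
Qed.

Lemma first_state_uniq w j j' : first_state j w -> first_state j' w -> j = j'.
Proof.
move=> [wj before_j] [wj' before_j']; apply/val_inj.
case: (ltngtP j j') => // [ltjj'|ltj'j].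
- by case: (before_j' j ltjj' wj).
- by case: (before_j j' ltj'j wj').
Qed.

Lemma kappa_first_state w B : measurable B ->
  kappa w B = (\sum_(j < n) (\1_(first_state j) w)%:E * kappa (state j) B)%E.
Proof.
move=> mB; have [j wj] := first_state_exists w.
rewrite (bigD1 j) //= big1 ?adde0 => [|i neq_ij].
  by case: (wj) => /in_stateP w_j _; rewrite indicE mem_set //= mul1e w_j.
rewrite indicE memNset ?mul0e // => wi.
by move/eqP: neq_ij; apply; exact: first_state_uniq wi wj.
Qed.

Lemma joint_first_state A B : pastMeas A -> measurable B ->
  P (A `&` futureX @^-1` B) =
  (\sum_(j < n) P (first_state j `&` A) * kappa (state j) B)%E.
Proof.
move=> pA mB; rewrite (kappa_cond.2 _ _ pA mB).
under eq_integral => w _ do rewrite kappa_first_state //.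
have mA := past_measurable pA.
have m1 j : measurable_fun A (fun w => (\1_(first_state j) w)%:E : \bar R).
  by apply/measurable_EFinP/measurable_indic; exact: first_state_measurable.
have p1 j w : A w -> (0 <= (\1_(first_state j) w)%:E :> \bar R)%E.
  by rewrite lee_fin indicE.
rewrite ge0_integral_sum // => [|j|j w Aw]; last 2 first.
- by apply: emeasurable_funM => //; exact: m1.
- by rewrite mule_ge0 // p1.
apply: eq_bigr => j _.
rewrite (ge0_integralZr _ mA (m1 j) (p1 j)) // integral_indic //.
exact: first_state_measurable.
Qed.

Hypothesis P_shift_invariant : shift_invariant P.

Lemma tau_in_span_states s : exists a : 'I_n -> R, forall B, measurable B ->
  tau P s B = \sum_(j < n) a j * fine (kappa (state j) B).
Proof.
have mA := past_measurable (past_word_past s).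
have mC j : measurable (first_state j `&` past_word s).
  by apply: measurableI => //; exact: first_state_measurable.
exists (fun j => fine (P (first_state j `&` past_word s))) => B mB.
rewrite /tau /P_N futureX_preimage_tau shift_invariant_iter //; last first.
  by apply: measurableI => //; exact: measurable_preimage measurable_futureX mB.
rewrite (joint_first_state _ _ (past_word_past s) mB) -sum_fine => [|j _].
  by apply: eq_bigr => j _; rewrite fineM // fin_num_measure.
by rewrite fin_numM // fin_num_measure.
Qed.

Lemma in_VP_in_span_states g : in_VP P g -> exists a : 'I_n -> R,
  forall B, measurable B -> g B = \sum_(j < n) a j * fine (kappa (state j) B).
Proof.
move=> [s gs]; have [a ha] := choice tau_in_span_states.
exists (fun j => \sum_(p <- s) p.1 * a p.2 j) => B mB.
under eq_bigr => j _ do rewrite big_distrl.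
rewrite gs // exchange_big /=; apply: eq_bigr => p _.
by rewrite ha // big_distrr /=; apply: eq_bigr => j _; rewrite mulrA.
Qed.

End CausalStates.

Theorem mainTheorem2 (R : realType) (Delta : finType) (d0 : Delta)
    (P : probability (OmegaZ d0) R) :
  shift_invariant P ->
  forall kappa : OmegaZ d0 -> probability (FutN d0) R,
    cond_dist_future_given_past P kappa ->
    forall n : nat, causal_states_atmost kappa n ->
      process_dim_atmost P n.
Proof.
move=> Pinv kappa kappa_cond n [state kappa_state] m f f_VP f_indep.
have [sep sepP] := @separating_sets _ _ _ _ (fun i : 'I_n => kappa (state i)).
apply: (@lin_indep_in_span_leq R _ measurable n m
  (fun j B => fine (kappa (state j) B)) f _ f_indep) => k.
exact: (in_VP_in_span_states _ _ kappa_cond _ _ kappa_state _ sepP Pinv _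
  (f_VP k)).
Qed.
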